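(* For every $k\ge1$ there is $c>0$ such that the following holds. For every $n>k$ and every weighted $k$-uniform hypergraph $w$ with vertex set $[n]$ such that $w([n])=0$, $$\mathbb{E}_{A,x,y}|w(A\cup\{x\})-w(A\cup\{y\})|\ge c\,n^{-k}\|w\|_1,$$ where the expectation is over a $(k-1)$-set $A\subseteq[n]$ and distinct vertices $x,y\notin A$ chosen uniformly at random.
   Context: $[n]=\{1,\dots,n\}$; a weighted $k$-uniform hypergraph on $[n]$ is a function $w$ from the $k$-subsets of $[n]$ to $\mathbb{R}$; $w([n])=\sum_e w(e)$ and $\|w\|_1=\sum_e|w(e)|$. *)

From mathcomp Require Import all_boot all_order all_algebra.
Set Implicit Arguments. Unset Strict Implicit. Unset Printing Implicit Defensive.
Import Order.TTheory GRing.Theory Num.Theory.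
Local Open Scope ring_scope.

(* Vertex set [n] is modelled by 'I_n.  A weighted k-uniform hypergraph is a
   function w from subsets of 'I_n to R; only its values on k-subsets matter. *)

Section Hyper.
Variable R : numDomainType.
Variables (n k : nat).
Implicit Types (w : {set 'I_n} -> R).

Definition wtotal w : R := \sum_(e : {set 'I_n} | #|e| == k) w e.

Definition wnorm1 w : R := \sum_(e : {set 'I_n} | #|e| == k) `|w e|.

Definition admissible (t : {set 'I_n} * 'I_n * 'I_n) : bool :=
  [&& #|t.1.1| == k.-1, t.1.2 \notin t.1.1, t.2 \notin t.1.1 & t.1.2 != t.2].

End Hyper.

Definition expected_diff (R : numFieldType) (n k : nat)
    (w : {set 'I_n} -> R) : R :=
  (\sum_(t : {set 'I_n} * 'I_n * 'I_n | admissible k t)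
      `|w (t.1.1 :|: [set t.1.2]) - w (t.1.1 :|: [set t.2])|)
  / (#|[set t : {set 'I_n} * 'I_n * 'I_n | admissible k t]|)%:R.

From mathcomp Require Import all_boot all_order all_algebra.
From mathcomp Require Import reals.
From mathcomp Require Import zify.
Set Implicit Arguments. Unset Strict Implicit. Unset Printing Implicit Defensive.
Import Order.TTheory GRing.Theory Num.Theory.

(* Call two k-sets d-near if they differ in at most d elements, and let V_d be
   the sum of |w e - w f| over ordered d-near pairs.  As w sums to zero,
   C(n,k) |w e| = |sum_f (w e - w f)| for every k-set e, and any two k-sets are
   k-near, so C(n,k) ||w||_1 <= V_k.  A (d+1)-near pair is joined through a
   d-near set and one exchange of elements; since a d-ball has at most (kn)^d
   elements, V_(d+1) <= kn V_d + (kn)^d V_1, hence V_k <= k (kn)^(k-1) V_1.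
   Finally V_1 is bounded by the sum over admissible triples, of which there are
   at most kn C(n,k), so the expectation is at least ||w||_1 / (k^(k+1) n^k). *)


Lemma card_setD_sym (T : finType) (A B : {set T}) :
  #|A| = #|B| -> #|A :\: B| = #|B :\: A|.
Proof. by move=> eqAB; have := cardsID B A; have := cardsID A B; rewrite setIC; lia. Qed.

Lemma card_sigma_set (I J : finType) (P : pred I) (Q : I -> pred J) :
  #|[set p : I * J | P p.1 && Q p.1 p.2]| = \sum_(i | P i) #|[set j | Q i j]|.
Proof.
rewrite -sum1dep_card -(pair_big_dep P Q (fun _ _ => 1%N)) /=.
by apply: eq_bigr => i _; rewrite sum1dep_card.
Qed.

Section KSets.
Variables n k : nat.
Implicit Types (d : nat) (e f g : {set 'I_n}).

Definition near d e f := [&& #|e| == k, #|f| == k & #|e :\: f| <= d]%N.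

Lemma near_sym d e f : near d e f = near d f e.
Proof.
rewrite /near andbCA; case: (#|e| =P k) => [eK|//]; case: (#|f| =P k) => [fK|//].
by rewrite card_setD_sym // eK fK.
Qed.

Lemma near0_eq e f : near 0 e f -> e = f.
Proof.
case/and3P=> /eqP eK /eqP fK; rewrite leqn0 cards_eq0 setD_eq0 => sef.
by apply/eqP; rewrite eqEcard sef eK fK leqnn.
Qed.

Lemma near1_swap e f : near 1 e f ->
  e = f \/ exists x y, [/\ x \in e, y \notin e & f = y |: (e :\ x)].
Proof.
move=> nef; case/and3P: (nef) => /eqP eK /eqP fK.
rewrite leq_eqVlt ltnS leqn0 => /orP[/cards1P[x exf] | ef0].
  right; have /cards1P[y fey] : #|f :\: e| == 1%N.
    by rewrite -card_setD_sym ?exf ?cards1 // eK fK.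
  move/setP: exf => exf; move/setP: fey => fey.
  have := exf x; have := fey y; rewrite !inE !eqxx => /andP[ye _] /andP[xf xe].
  exists x, y; split=> //; apply/setP=> z.
  have := exf z; have := fey z; rewrite !inE.
  by case: (z == x); case: (z == y); case: (z \in e); case: (z \in f).
by left; apply: near0_eq; rewrite /near eK fK !eqxx leqn0.
Qed.

Lemma near_step d e f : near d.+1 e f -> exists2 g, near d e g & near 1 g f.
Proof.
case/and3P=> /eqP eK /eqP fK; rewrite leq_eqVlt ltnS => /orP[/eqP def | ledf]; last first.
  by exists f; rewrite /near ?eK fK eqxx ?ledf ?setDv ?cards0.
have [x] : exists x, x \in e :\: f by apply/card_gt0P; rewrite def.
have [y] : exists y, y \in f :\: e by apply/card_gt0P; rewrite -card_setD_sym ?def // eK fK.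
rewrite !inE => /andP[ye yf] /andP[xf xe].
set g := x |: (f :\ y).
have gK : #|g| = k.
  by rewrite cardsU1 !inE (negbTE xf) andbF; have := cardsD1 y f; rewrite yf fK.
exists g; rewrite /near ?eK gK ?fK eqxx /=.
- have := cardsD1 x (e :\: f); rewrite !inE xf xe def => defx.
  apply: (@leq_trans #|(e :\: f) :\ x|); last by lia.
  apply: subset_leq_card; apply/subsetP=> z; rewrite !inE.
  have [->|_] := eqVneq z y; first by rewrite (negbTE ye) !andbF.
  by case: (z == x); case: (z \in f); case: (z \in e).
- rewrite -(cards1 x); apply: subset_leq_card; apply/subsetP=> z; rewrite !inE.
  by case: (z == x); case: (z == y); case: (z \in f).
Qed.

(* Needed for ball1: for k = 0 the ball of radius 1 around set0 has one element. *)
Hypothesis k_gt0 : (0 < k)%N.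

Definition ball d g := #|[set f | near d g f]|.

Lemma ball0 g : ball 0 g <= 1.
Proof.
rewrite -(cards1 g); apply/subset_leq_card/subsetP => f.
by rewrite !inE => /near0_eq ->.
Qed.

Lemma ball1 g : ball 1 g <= k * n.
Proof.
rewrite /ball; have [gK|gK] := eqVneq #|g| k; last first.
  suff -> : [set f | near 1 g f] = set0 by rewrite cards0.
  by apply/setP=> f; rewrite !inE /near (negbTE gK).
have -> : (k * n = #|setX g [set: 'I_n]|)%N by rewrite cardsX cardsT card_ord gK.
apply: leq_trans (leq_imset_card (fun p => p.2 |: (g :\ p.1)) (setX g setT)).
apply/subset_leq_card/subsetP => f; rewrite inE => /near1_swap [<- | [x [y [xg _ ->]]]].
  have [x xg] : exists x, x \in g by apply/card_gt0P; rewrite gK.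
  by apply/imsetP; exists (x, x); rewrite ?inE ?xg //= setD1K.
by apply/imsetP; exists (x, y); rewrite ?inE ?xg.
Qed.

Lemma ballS d g : ball d.+1 g <= k * n * ball d g.
Proof.
set P := [set p : {set 'I_n} * {set 'I_n} | near d g p.1 && near 1 p.1 p.2].
apply: (@leq_trans #|P|).
  apply: leq_trans (leq_imset_card snd P); apply/subset_leq_card/subsetP => f.
  rewrite inE => /near_step [h ngh nhf]; apply/imsetP; exists (h, f) => //.
  by rewrite inE ngh nhf.
rewrite card_sigma_set /ball -sum1dep_card big_distrr /=.
by apply: leq_sum => h _; rewrite muln1; apply: ball1.
Qed.

Lemma ball_le d g : ball d g <= (k * n) ^ d.
Proof.
elim: d g => [|d IH] g; first exact: ball0.
by rewrite expnS; apply: leq_trans (ballS d g) _; apply: leq_mul.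
Qed.

Lemma card_admissible_le :
  #|[set t : {set 'I_n} * 'I_n * 'I_n | admissible k t]| <=
  k * n * #|[set e : {set 'I_n} | #|e| == k]|.
Proof.
set P := fun ex : {set 'I_n} * 'I_n => (#|ex.1| == k) && (ex.2 \in ex.1).
set Q := [set t : {set 'I_n} * 'I_n * 'I_n | P t.1 && true].
apply: (@leq_trans #|Q|).
  apply: leq_trans (leq_imset_card (fun t => (t.1.1 :\ t.1.2, t.1.2, t.2)) Q).
  apply/subset_leq_card/subsetP => -[[A x] y]; rewrite inE => /and4P[/eqP AK xA yA xy].
  apply/imsetP; exists (x |: A, x, y); last by rewrite /= setU1K.
  by rewrite !inE /P /= setU11 cardsU1 xA AK; apply/eqP; lia.
rewrite -sum1dep_card -(pair_big_dep P (fun _ _ => true) (fun _ _ => 1%N)) /=.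
rewrite -(pair_big_dep (fun e => #|e| == k) (fun e x => x \in e)
  (fun _ _ => \sum_(y : 'I_n) 1%N)) /=.
rewrite -sum1dep_card big_distrr /=; apply: leq_sum => e /eqP eK.
by rewrite big_const_ord iter_addn_0 mul1n sum_nat_const eK muln1.
Qed.

Lemma card_admissible_gt0 : (k < n)%N ->
  (0 < #|[set t : {set 'I_n} * 'I_n * 'I_n | admissible k t]|)%N.
Proof.
move=> lt_kn.
have [A] : exists A, A \in [set B : {set 'I_n} | #|B| == k.-1].
  by apply/card_gt0P; rewrite card_draws card_ord bin_gt0; lia.
rewrite inE => /eqP AK.
have AcK : #|~: A| = (n - k.-1)%N by have := cardsC A; rewrite card_ord AK; lia.
have [x xA] : exists x, x \in ~: A by apply/card_gt0P; rewrite AcK; lia.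
have [y yA] : exists y, y \in (~: A) :\ x.
  by apply/card_gt0P; have := cardsD1 x (~: A); rewrite xA AcK; lia.
apply/card_gt0P; exists (A, x, y); rewrite inE /admissible /= AK eqxx.
by move: xA yA; rewrite !inE => -> /andP[yx ->]; rewrite eq_sym yx.
Qed.

Local Open Scope ring_scope.

Lemma ler_sum_cover (R : numDomainType) (I J : finType) (Q : pred I) (P : pred J)
    (phi : I -> J) (F : J -> R) :
  (forall j, 0 <= F j) -> (forall j, P j -> F j != 0 -> exists2 i, Q i & phi i = j) ->
  \sum_(j | P j) F j <= \sum_(i | Q i) F (phi i).
Proof.
move=> F_ge0 covP; rewrite (partition_big phi predT) //= big_mkcond /=.
apply: ler_sum => j _; case: ifP => Pj; last exact: sumr_ge0.
have [->|/(covP j Pj)[i Qi <-]] := eqVneq (F j) 0; first exact: sumr_ge0.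
by rewrite (bigD1 i) ?Qi ?eqxx //= lerDl sumr_ge0.
Qed.

Section Variation.
Variables (R : numDomainType) (w : {set 'I_n} -> R).

Definition variation d : R := \sum_e \sum_(f | near d e f) `|w e - w f|.

Lemma variation_le_paths d : variation d.+1 <=
  \sum_e \sum_f \sum_(g | near d e g && near 1 g f) (`|w e - w g| + `|w g - w f|).
Proof.
apply: ler_sum => e _; rewrite [X in _ <= X](bigID (near d.+1 e)) /= -[X in X <= _]addr0.
apply: lerD; last by do 2!(apply: sumr_ge0 => ? _); apply: addr_ge0.
apply: ler_sum => f /near_step [g ndeg n1gf].
rewrite (bigD1 g) ?ndeg ?n1gf //= (le_trans (ler_distD (w g) _ _)) //.
by rewrite lerDl sumr_ge0 // => g' _; rewrite addr_ge0.
Qed.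

Lemma sum_paths_first (F : {set 'I_n} -> {set 'I_n} -> R) d d' :
  \sum_e \sum_f \sum_(g | near d e g && near d' g f) F e g =
  \sum_e \sum_(g | near d e g) (ball d' g)%:R * F e g.
Proof.
apply: eq_bigr => e _; rewrite (exchange_big_dep (near d e)) /=; last by move=> f g _ /andP[].
apply: eq_bigr => g ndeg; rewrite mulr_natl -sumr_const.
by apply: eq_bigl => f; rewrite inE ndeg.
Qed.

Lemma sum_paths_last (F : {set 'I_n} -> {set 'I_n} -> R) d d' :
  \sum_e \sum_f \sum_(g | near d e g && near d' g f) F g f =
  \sum_g \sum_(f | near d' g f) (ball d g)%:R * F g f.
Proof.
rewrite exchange_big /=.
under eq_bigr do under eq_bigr do under eq_bigl do rewrite andbC (near_sym d') (near_sym d).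
rewrite (sum_paths_first (fun f g => F g f)) (exchange_big_dep xpredT) //=.
by apply: eq_bigr => g _; apply: eq_bigl => f; rewrite near_sym.
Qed.

Lemma variation_ge0 d : 0 <= variation d.
Proof. by apply: sumr_ge0 => e _; apply: sumr_ge0. Qed.

Lemma variationS d :
  variation d.+1 <= (k * n)%:R * variation d + ((k * n) ^ d)%:R * variation 1.
Proof.
apply: le_trans (variation_le_paths d) _.
under eq_bigr do under eq_bigr do rewrite big_split /=.
under eq_bigr do rewrite big_split /=.
rewrite big_split /= sum_paths_first sum_paths_last.
apply: lerD; rewrite mulr_sumr; apply: ler_sum => e _; rewrite mulr_sumr;
  apply: ler_sum => g _; apply: ler_wpM2r; rewrite ?ler_nat //.
  exact: ball1.
exact: ball_le.
Qed.

Lemma variation_le m : variation m.+1 <= (m.+1 * (k * n) ^ m)%:R * variation 1.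
Proof.
elim: m => [|m IH]; first by rewrite mul1n expn0 mul1r.
apply: le_trans (variationS m.+1) _.
apply: le_trans (lerD (ler_wpM2l (ler0n _ _) IH) (lexx _)) _.
rewrite mulrA -natrM -mulrDl -natrD ler_wpM2r ?variation_ge0 // ler_nat expnS.
nia.
Qed.

Lemma card_ksets_mul_norm_le : wtotal k w = 0 ->
  #|[set e : {set 'I_n} | #|e| == k]|%:R * wnorm1 k w <= variation k.
Proof.
move=> wt; rewrite /variation (bigID (fun e => #|e| == k)) /=.
rewrite [X in _ <= _ + X]big1 ?addr0; last first.
  by move=> e /negbTE eK; apply: big_pred0 => f; rewrite /near eK.
rewrite /wnorm1 mulr_sumr; apply: ler_sum => e /eqP eK.
rewrite (eq_bigl (fun f => #|f| == k)); last first.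
  by move=> f; rewrite /near eK eqxx -[X in (_ <= X)%N]eK subset_leq_card ?subsetDl ?andbT.
apply: le_trans (ler_norm_sum _ _ _); rewrite sumrB.
have -> : \sum_(f : {set 'I_n} | #|f| == k) w e = #|[set f : {set 'I_n} | #|f| == k]|%:R * w e.
  by rewrite -sum1dep_card natr_sum mulr_suml; apply: eq_bigr => f _; rewrite mul1r.
by move: wt; rewrite /wtotal => ->; rewrite subr0 normrM normr_nat.
Qed.

Lemma variation1_le_sum_admissible : variation 1 <=
  \sum_(t | admissible k t) `|w (t.1.1 :|: [set t.1.2]) - w (t.1.1 :|: [set t.2])|.
Proof.
rewrite /variation (pair_big_dep xpredT (near 1) (fun e f => `|w e - w f|)) /=.
apply: le_trans (ler_sum_cover (Q := admissible k)
  (phi := fun t => (t.1.1 :|: [set t.1.2], t.1.1 :|: [set t.2]))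
  (F := fun p => `|w p.1 - w p.2|) _ _) _ => // -[e f] /= n1ef.
case/and3P: (n1ef) => /eqP eK _ _.
case/near1_swap: n1ef => [<- | [x [y [xe ye ->]]]]; first by rewrite subrr normr0 eqxx.
move=> _; exists (e :\ x, x, y); last by rewrite /= setUC setD1K // setUC.
rewrite /admissible /= !inE eqxx (negbTE ye) andbF /=.
have := cardsD1 x e; rewrite xe eK => ->; rewrite add1n /= eqxx.
by apply: contraNneq ye => <-.
Qed.

Lemma card_admissible_mul_norm_le : wtotal k w = 0 ->
  #|[set t : {set 'I_n} * 'I_n * 'I_n | admissible k t]|%:R * wnorm1 k w <=
  (k ^ k.+1 * n ^ k)%:R *
    \sum_(t | admissible k t) `|w (t.1.1 :|: [set t.1.2]) - w (t.1.1 :|: [set t.2])|.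
Proof.
move=> wt.
have W0 : 0 <= wnorm1 k w by apply: sumr_ge0 => e _.
have NM : #|[set t : {set 'I_n} * 'I_n * 'I_n | admissible k t]|%:R <=
    (k * n * #|[set e : {set 'I_n} | #|e| == k]|)%:R :> R.
  by rewrite ler_nat card_admissible_le.
have Vk := variation_le k.-1; rewrite prednK // in Vk.
apply: le_trans (ler_wpM2r W0 NM) _.
rewrite natrM -mulrA; apply: le_trans (ler_wpM2l (ler0n _ _) (card_ksets_mul_norm_le wt)) _.
apply: le_trans (ler_wpM2l (ler0n _ _) Vk) _.
rewrite mulrA -natrM.
apply: le_trans (ler_wpM2l (ler0n _ _) variation1_le_sum_admissible) _.
by rewrite ler_wpM2r ?sumr_ge0 // ler_nat mulnCA -expnS prednK // expnMn expnS mulnA leqnn.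
Qed.

End Variation.

End KSets.

Local Open Scope ring_scope.

Theorem proposition3p3 (R : realType) (k : nat) (hk : (1 <= k)%N) :
  exists c : R, 0 < c /\
    forall (n : nat) (w : {set 'I_n} -> R),
      (k < n)%N ->
      wtotal k w = 0 ->
      expected_diff k w >= c * (n%:R ^- k) * wnorm1 k w.
Proof.
exists (k ^ k.+1)%:R^-1; split; first by rewrite invr_gt0 ltr0n expn_gt0 hk.
move=> n w lt_kn wt.
rewrite /expected_diff ler_pdivlMr ?ltr0n ?card_admissible_gt0 //.
have := card_admissible_mul_norm_le hk wt.
rewrite natrM !natrX -ler_pdivrMl ?mulr_gt0 ?exprn_gt0 ?ltr0n ?expn_gt0 ?hk //; last by lia.
by move=> le_S; apply: le_trans le_S; rewrite invfM [#|_|%:R * _]mulrC mulrA.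
Qed.
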